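(* Let $n\in\mathbb{N}=\{1,2,\dots\}$, $0\le i\le n-1$, and $\alpha,\beta\in\mathbb{R}$ such that the Jacobi functions below are defined. Then on $(-1,1)$ $$\int\frac{t^i}{i!}p_n^{(\alpha,\beta)}(t)\,dt=-\sum_{k=0}^i\frac{2^{k+1}\Gamma(n+\alpha+\beta+1)}{\Gamma(n+k+\alpha+\beta+2)}\frac{t^{i-k}}{(i-k)!}p_{n-1-k}^{(\alpha+1+k,\beta+1+k)}(t),$$ i.e. the right-hand side is an antiderivative of $t\mapsto\frac{t^i}{i!}p_n^{(\alpha,\beta)}(t)$.
   Context: The Jacobi polynomials are $P_n^{(\alpha,\beta)}(t)=\sum_{j=0}^n\frac{1}{2^n}\binom{n+\alpha}{n-j}\binom{n+\beta}{j}(t-1)^j(t+1)^{n-j}$. The Jacobi functions on $(-1,1)$ are $$p_n^{(\alpha,\beta)}(t)=\frac{(2n+\alpha+\beta+1)\Gamma(n+\alpha+\beta+1)\,n!}{2^{\alpha+\beta+1}\Gamma(n+\alpha+1)\Gamma(n+\beta+1)}(1-t)^{\alpha}(1+t)^{\beta}P_n^{(\alpha,\beta)}(t)=\frac{(-1)^n(2n+\alpha+\beta+1)\Gamma(n+\alpha+\beta+1)}{2^{n+\alpha+\beta+1}\Gamma(n+\alpha+1)\Gamma(n+\beta+1)}\frac{d^n}{dt^n}\big((1-t)^{n+\alpha}(1+t)^{n+\beta}\big).$$ *)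

From Stdlib Require Import Reals Factorial.
From Coquelicot Require Import Coquelicot.
Open Scope R_scope.

(* Euler's Gamma function on the reals, via the Gauss (Euler) limit formula
   Gamma(x) = lim_{m -> oo} m! m^x / (x (x+1) ... (x+m)),
   valid for every real x that is not a non-positive integer. *)
Fixpoint rising_prod (x : R) (m : nat) : R :=
  match m with
  | O => x
  | S k => rising_prod x k * (x + INR (S k))
  end.

Definition Gamma (x : R) : R :=
  real (Lim_seq (fun m => INR (fact m) * Rpower (INR m) x / rising_prod x m)).

Definition Gamma_defined (x : R) : Prop := forall m : nat, x <> - INR m.

Fixpoint binomR (r : R) (k : nat) : R :=
  match k with
  | O => 1
  | S j => binomR r j * (r - INR j) / INR (S j)
  end.

Definition jacobiP (n : nat) (a b t : R) : R :=
  sum_f_R0 (fun j => / 2 ^ n * binomR (INR n + a) (n - j) * binomR (INR n + b) j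
                      * (t - 1) ^ j * (t + 1) ^ (n - j)) n.

Definition jacobi_fun (n : nat) (a b t : R) : R :=
  (2 * INR n + a + b + 1) * Gamma (INR n + a + b + 1) * INR (fact n)
  / (Rpower 2 (a + b + 1) * Gamma (INR n + a + 1) * Gamma (INR n + b + 1))
  * Rpower (1 - t) a * Rpower (1 + t) b * jacobiP n a b t.

From Stdlib Require Import Reals Factorial Lra Lia.
From Coquelicot Require Import Coquelicot.
Open Scope R_scope.

(* The weighted Jacobi polynomials w_p^(a,b)(t) = (1-t)^a (1+t)^b P_p^(a,b)(t) satisfy the
   Rodrigues-type relation  d/dt w_p^(a+1,b+1) = -2 (p+1) w_(p+1)^(a,b),  which follows termwise
   from the explicit sum and the recurrence of the binomial coefficients. Up to normalization,
   the k-th summand of the right-hand side is t^(i-k)/(i-k)! w_(n-1-k)^(a+1+k,b+1+k); by the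
   product rule its derivative is f_(k+1) - f_k with f_k = t^(i-k)/(i-k)! w_(n-k)^(a+k,b+k), so
   the sum telescopes to -f_0: this is integration by parts repeated i+1 times. The normalizing
   constants match because Gamma(x+1) = x Gamma(x), which we derive from the Gauss limit. *)

Lemma Rmult_near1_lt (y z v d : R) :
  0 < v -> Rabs (v - 1) <= d -> y < z -> y * v < z + Rabs z * d.
Proof.
  intros Hv Hd Hyz.
  assert (Hz : z * v <= z + Rabs z * d).
  { replace (z * v) with (z + z * (v - 1)) by ring.
    apply Rplus_le_compat_l, Rle_trans with (Rabs (z * (v - 1))); [apply Rle_abs|].
    rewrite Rabs_mult. apply Rmult_le_compat_l; [apply Rabs_pos | exact Hd]. }
  apply Rmult_lt_compat_r with (r := v) in Hyz; lra.
Qed.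

Lemma Rmult_near1_gt (y z v d : R) :
  0 < v -> Rabs (v - 1) <= d -> z < y -> z - Rabs z * d < y * v.
Proof.
  intros Hv Hd Hzy.
  pose proof (Rmult_near1_lt (- y) (- z) v d Hv Hd ltac:(lra)) as H.
  rewrite Rabs_Ropp in H. lra.
Qed.

Lemma is_LimSup_seq_mult_lim1 (u v : nat -> R) (l : Rbar) :
  is_lim_seq v 1 -> is_LimSup_seq u l -> is_LimSup_seq (fun n => u n * v n) l.
Proof.
  intros Hv Hu.
  assert (Hnear : forall d, 0 < d -> exists N, forall n, (N <= n)%nat ->
                    0 < v n /\ Rabs (v n - 1) <= d).
  { intros d Hd. apply is_lim_seq_spec in Hv.
    destruct (Hv (mkposreal (Rmin d (1/2)) ltac:(apply Rmin_pos; lra))) as [N HN].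
    exists N. intros n Hn. specialize (HN n Hn). simpl in HN.
    pose proof (Rmin_l d (1/2)); pose proof (Rmin_r d (1/2)).
    apply Rabs_def2 in HN. split; [lra|]. apply Rabs_le; lra. }
  destruct l as [l| |]; simpl in *.
  - intros eps.
    set (e := eps / 2). assert (He : 0 < e) by (destruct eps; unfold e; simpl; lra).
    set (d := e / (Rabs l + e + 1)).
    assert (Hd : 0 < d) by (apply Rdiv_lt_0_compat; pose proof (Rabs_pos l); lra).
    assert (Herr : forall z, Rabs (z - l) <= e -> Rabs z * d < e).
    { intros z Hz. unfold d. apply (Rmult_lt_reg_r (Rabs l + e + 1));
        [pose proof (Rabs_pos l); lra|].
      field_simplify; [|pose proof (Rabs_pos l); lra].
      pose proof (Rabs_triang_inv z l). nra. }
    destruct (Hu (mkposreal e He)) as [Hinf [Nsup Hsup]]. simpl in Hinf, Hsup.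
    destruct (Hnear d Hd) as [Nv HNv].
    split.
    + intros N. destruct (Hinf (max N Nv)) as [n [Hn Hun]].
      exists n. split; [lia|]. destruct (HNv n ltac:(lia)) as [Hv0 Hv1].
      pose proof (Rmult_near1_gt _ _ _ _ Hv0 Hv1 Hun) as H.
      pose proof (Herr (l - e) ltac:(rewrite Rabs_left1; lra)). unfold e in *. lra.
    + exists (max Nsup Nv). intros n Hn. destruct (HNv n ltac:(lia)) as [Hv0 Hv1].
      pose proof (Rmult_near1_lt _ _ _ _ Hv0 Hv1 (Hsup n ltac:(lia))) as H.
      pose proof (Herr (l + e) ltac:(rewrite Rabs_right; lra)). unfold e in *. lra.
  - intros M N. destruct (Hnear (1/2) ltac:(lra)) as [Nv HNv].
    destruct (Hu (2 * Rabs M + 2) (max N Nv)) as [n [Hn Hun]].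
    exists n. split; [lia|]. destruct (HNv n ltac:(lia)) as [Hv0 Hv1].
    pose proof (Rmult_near1_gt _ _ _ _ Hv0 Hv1 Hun) as H.
    pose proof (Rle_abs M). rewrite (Rabs_right (2 * Rabs M + 2)) in H
      by (pose proof (Rabs_pos M); lra). lra.
  - intros M. destruct (Hnear (1/2) ltac:(lra)) as [Nv HNv].
    destruct (Hu (- 2 * Rabs M - 2)) as [N HN].
    exists (max N Nv). intros n Hn. destruct (HNv n ltac:(lia)) as [Hv0 Hv1].
    pose proof (Rmult_near1_lt _ _ _ _ Hv0 Hv1 (HN n ltac:(lia))) as H.
    pose proof (Rle_abs (- M)). rewrite Rabs_Ropp in *.
    rewrite (Rabs_left1 (- 2 * Rabs M - 2)) in H by (pose proof (Rabs_pos M); lra). lra.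
Qed.

Lemma Lim_seq_mult_lim1 (u v : nat -> R) :
  is_lim_seq v 1 -> Lim_seq (fun n => u n * v n) = Lim_seq u.
Proof.
  intros Hv. unfold Lim_seq.
  assert (Hsup : LimSup_seq (fun n => u n * v n) = LimSup_seq u).
  { apply is_LimSup_seq_unique, is_LimSup_seq_mult_lim1; [exact Hv|].
    unfold LimSup_seq. destruct (ex_LimSup_seq u); simpl; auto. }
  assert (Hinf : LimInf_seq (fun n => u n * v n) = LimInf_seq u).
  { apply is_LimInf_seq_unique, is_LimSup_opp_LimInf_seq.
    apply is_LimSup_seq_ext with (fun n => - u n * v n); [intros n; ring|].
    apply is_LimSup_seq_mult_lim1; [exact Hv|].
    apply is_LimSup_opp_LimInf_seq.
    unfold LimInf_seq. destruct (ex_LimInf_seq u); simpl; auto. }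
  rewrite Hsup, Hinf. reflexivity.
Qed.

Lemma rising_prod_succ (x : R) (m : nat) :
  rising_prod x (S m) = x * rising_prod (x + 1) m.
Proof.
  induction m as [|m IH]; [simpl; ring|].
  change (rising_prod x (S (S m))) with (rising_prod x (S m) * (x + INR (S (S m)))).
  change (rising_prod (x + 1) (S m)) with (rising_prod (x + 1) m * (x + 1 + INR (S m))).
  rewrite IH, !S_INR. ring.
Qed.

Lemma Gamma_defined_plus_neq0 (x : R) (k : nat) : Gamma_defined x -> x + INR k <> 0.
Proof. intros H E. apply (H k). lra. Qed.

Lemma Gamma_defined_plus (x : R) (k : nat) : Gamma_defined x -> Gamma_defined (x + INR k).
Proof. intros H m E. apply (H (m + k)%nat). rewrite plus_INR. lra. Qed.

Lemma rising_prod_neq0 (x : R) (m : nat) : Gamma_defined x -> rising_prod x m <> 0.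
Proof.
  intros H. induction m as [|m IH].
  - pose proof (Gamma_defined_plus_neq0 x 0 H). simpl in *. lra.
  - apply Rmult_integral_contrapositive. split; [exact IH|].
    now apply Gamma_defined_plus_neq0.
Qed.

Lemma is_lim_seq_INR_div_succ : is_lim_seq (fun m => INR m / INR (S m)) 1.
Proof.
  apply is_lim_seq_ext with (fun m => 1 - / INR (S m)).
  { intros m. rewrite S_INR. field. pose proof (pos_INR m). lra. }
  replace (Finite 1) with (Rbar_minus 1 0) by (simpl; f_equal; ring).
  apply is_lim_seq_minus'; [apply is_lim_seq_const|].
  replace (Finite 0) with (Rbar_inv p_infty) by reflexivity.
  apply is_lim_seq_inv; [|discriminate].
  apply (is_lim_seq_incr_1 INR), is_lim_seq_INR.
Qed.

(* The correction factor relating the Gauss sequences of [x + 1] and [x]. *)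
Lemma is_lim_seq_Gauss_ratio (x : R) :
  is_lim_seq (fun m => Rpower (INR m) (x + 1) / (INR (S m) * Rpower (INR (S m)) x)) 1.
Proof.
  apply is_lim_seq_ext_loc with
    (fun m => INR m / INR (S m) * exp (x * ln (INR m / INR (S m)))).
  { exists 1%nat. intros m Hm.
    assert (0 < INR m) by (apply lt_0_INR; lia).
    assert (0 < INR (S m)) by (apply lt_0_INR; lia).
    unfold Rpower. rewrite ln_div, Rmult_minus_distr_l, Rmult_plus_distr_r, Rmult_1_l,
      exp_plus, exp_ln, Rminus_def, exp_plus, exp_Ropp by auto.
    field. pose proof (exp_pos (x * ln (INR (S m)))). lra. }
  replace (Finite 1) with (Rbar_mult 1 (exp (x * ln 1)))
    by (rewrite ln_1, Rmult_0_r, exp_0; simpl; f_equal; ring).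
  apply is_lim_seq_mult'; [apply is_lim_seq_INR_div_succ|].
  apply (filterlim_comp _ _ _ (fun m => x * ln (INR m / INR (S m))) exp _ (locally (x * ln 1)));
    [|apply continuous_exp].
  apply (filterlim_comp _ _ _ (fun m => ln (INR m / INR (S m))) (fun y => x * y) _ (locally (ln 1)));
    [|apply (continuous_mult (fun _ => x) (fun y => y)); [apply continuous_const | apply continuous_id]].
  apply (filterlim_comp _ _ _ (fun m => INR m / INR (S m)) ln _ (locally 1));
    [apply is_lim_seq_INR_div_succ | apply continuous_ln; lra].
Qed.

Lemma Gamma_succ (x : R) : Gamma_defined x -> Gamma (x + 1) = x * Gamma x.
Proof.
  intros H. unfold Gamma.
  set (g := fun k => INR (fact k) * Rpower (INR k) x / rising_prod x k).
  rewrite (Lim_seq_ext_loc _ (fun m => x * (g (S m)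
      * (Rpower (INR m) (x + 1) / (INR (S m) * Rpower (INR (S m)) x))))).
  2: { exists 1%nat. intros m Hm. unfold g.
       rewrite rising_prod_succ, fact_simpl, mult_INR.
       pose proof (rising_prod_neq0 (x + 1) m (Gamma_defined_plus x 1 H)).
       pose proof (Gamma_defined_plus_neq0 x 0 H).
       assert (0 < INR (S m)) by (apply lt_0_INR; lia).
       assert (0 < Rpower (INR (S m)) x) by apply exp_pos.
       simpl INR in *. field. repeat split; lra. }
  rewrite Lim_seq_scal_l, Lim_seq_mult_lim1 by apply is_lim_seq_Gauss_ratio.
  rewrite (Lim_seq_incr_1 g).
  destruct (Lim_seq g) as [l| |]; simpl; [reflexivity| |];
    unfold Rbar_mult, Rbar_mult'; destruct (Rle_dec 0 x) as [h|h];
    try destruct (Rle_lt_or_eq_dec 0 x h); simpl; ring.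
Qed.

Lemma Gamma_plus_neq0 (x : R) (k : nat) :
  Gamma_defined x -> Gamma x <> 0 -> Gamma (x + INR k) <> 0.
Proof.
  intros H G. induction k as [|k IH]; [simpl; now rewrite Rplus_0_r|].
  rewrite S_INR, <- Rplus_assoc, Gamma_succ by now apply Gamma_defined_plus.
  apply Rmult_integral_contrapositive. split; [|exact IH].
  now apply Gamma_defined_plus_neq0.
Qed.

Lemma is_derive_sum_f_R0 (f : nat -> R -> R) (df : nat -> R) (n : nat) (t : R) :
  (forall j, (j <= n)%nat -> is_derive (f j) t (df j)) ->
  is_derive (fun s => sum_f_R0 (fun j => f j s) n) t (sum_f_R0 df n).
Proof.
  intros H. rewrite <- sum_n_Reals.
  apply (is_derive_ext (fun s => sum_n (fun j => f j s) n));
    [intros s; apply sum_n_Reals | now apply (@is_derive_sum_n R_AbsRing R_NormedModule)].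
Qed.

Lemma is_derive_Rmult (f g : R -> R) (t df dg : R) :
  is_derive f t df -> is_derive g t dg ->
  is_derive (fun s => f s * g s) t (df * g t + f t * dg).
Proof. intros Hf Hg. apply (is_derive_mult f g t df dg Hf Hg), Rmult_comm. Qed.

Lemma is_derive_eq (f : R -> R) (t l l' : R) :
  is_derive f t l -> l = l' -> is_derive f t l'.
Proof. now intros H <-. Qed.

Lemma is_derive_jacobi_weight (a b t : R) : -1 < t < 1 ->
  is_derive (fun s => Rpower (1 - s) (a + 1) * Rpower (1 + s) (b + 1)) t
    (Rpower (1 - t) a * Rpower (1 + t) b * ((b + 1) * (1 - t) - (a + 1) * (1 + t))).
Proof.
  intros Ht. unfold Rpower. auto_derive; [lra|].
  rewrite !Rmult_plus_distr_r, !Rmult_1_l, !exp_plus, !exp_ln by lra.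
  replace (1 + - t) with (1 - t) by ring. field. lra.
Qed.

Lemma jacobi_weight_monomial (a b t : R) (j q : nat) : -1 < t < 1 ->
  Rpower (1 - t) a * Rpower (1 + t) b * (t - 1) ^ j * (t + 1) ^ q
  = (-1) ^ j * (Rpower (1 - t) (a + INR j) * Rpower (1 + t) (b + INR q)).
Proof.
  intros Ht.
  rewrite !Rpower_plus, !Rpower_pow by lra.
  replace ((t - 1) ^ j) with ((-1) ^ j * (1 - t) ^ j)
    by (rewrite <- Rpow_mult_distr; f_equal; ring).
  replace (t + 1) with (1 + t) by ring. ring.
Qed.

Lemma is_derive_jacobi_weight_monomial (a b t : R) (j q : nat) : -1 < t < 1 ->
  is_derive (fun s => Rpower (1 - s) (a + 1) * Rpower (1 + s) (b + 1) * (s - 1) ^ j * (s + 1) ^ q) t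
    (Rpower (1 - t) a * Rpower (1 + t) b * (t - 1) ^ j * (t + 1) ^ q
     * ((b + 1 + INR q) * (1 - t) - (a + 1 + INR j) * (1 + t))).
Proof.
  intros Ht.
  apply is_derive_ext_loc with
    (fun s => (-1) ^ j * (Rpower (1 - s) (a + INR j + 1) * Rpower (1 + s) (b + INR q + 1))).
  { apply (locally_interval _ t (-1) 1); [simpl; lra | simpl; lra|].
    intros s Hs1 Hs2. simpl in Hs1, Hs2.
    rewrite jacobi_weight_monomial by lra.
    now replace (a + INR j + 1) with (a + 1 + INR j) by ring;
      replace (b + INR q + 1) with (b + 1 + INR q) by ring. }
  eapply is_derive_eq.
  - apply (is_derive_scal (fun s => _ * _)), (is_derive_jacobi_weight (a + INR j) (b + INR q) t Ht).
  - rewrite jacobi_weight_monomial by lra. simpl. ring.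
Qed.

Lemma sum_f_R0_shift_weighted (Z : nat -> R) (p : nat) :
  sum_f_R0 (fun j => INR (S p - j) * Z j + INR (S j) * Z (S j)) p
  = INR (S p) * sum_f_R0 Z (S p).
Proof.
  rewrite plus_sum.
  replace (sum_f_R0 (fun j => INR (S p - j) * Z j) p)
    with (sum_f_R0 (fun j => INR (S p - j) * Z j) (S p))
    by (rewrite tech5, Nat.sub_diag; simpl INR; ring).
  replace (sum_f_R0 (fun j => INR (S j) * Z (S j)) p)
    with (sum_f_R0 (fun j => INR j * Z j) (S p))
    by (rewrite decomp_sum by lia; change (INR 0) with 0; simpl pred; ring).
  rewrite <- plus_sum, scal_sum. apply sum_eq. intros j Hj.
  rewrite minus_INR by lia. ring.
Qed.

(* Both factors of the weight derivative are absorbed by the recurrence of [binomR]. *)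
Lemma binomR_lowering (r s t : R) (p j : nat) : (j <= p)%nat ->
  binomR r (p - j) * binomR s j * (t - 1) ^ j * (t + 1) ^ (p - j)
    * ((s - INR j) * (1 - t) - (r - INR (p - j)) * (1 + t))
  = - (INR (S p - j) * (binomR r (S p - j) * binomR s j * ((t - 1) ^ j * (t + 1) ^ (S p - j)))
       + INR (S j) * (binomR r (S p - S j) * binomR s (S j)
                      * ((t - 1) ^ S j * (t + 1) ^ (S p - S j)))).
Proof.
  intros Hj.
  replace (S p - j)%nat with (S (p - j)) by lia.
  replace (S p - S j)%nat with (p - j)%nat by lia.
  change (binomR r (S (p - j))) with (binomR r (p - j) * (r - INR (p - j)) / INR (S (p - j))).
  change (binomR s (S j)) with (binomR s j * (s - INR j) / INR (S j)).
  simpl pow. field. split; apply not_0_INR; lia.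
Qed.

Definition jacobi_weighted (p : nat) (a b t : R) : R :=
  Rpower (1 - t) a * Rpower (1 + t) b * jacobiP p a b t.

Lemma is_derive_jacobi_weighted (p : nat) (a b t : R) : -1 < t < 1 ->
  is_derive (jacobi_weighted p (a + 1) (b + 1)) t (-2 * INR (S p) * jacobi_weighted (S p) a b t).
Proof.
  intros Ht.
  set (r := INR p + (a + 1)). set (s := INR p + (b + 1)).
  set (c := fun j => / 2 ^ p * binomR r (p - j) * binomR s j).
  set (Z := fun j => / 2 ^ S p * binomR r (S p - j) * binomR s j * (t - 1) ^ j * (t + 1) ^ (S p - j)).
  apply is_derive_ext with (fun x => sum_f_R0 (fun j => c j
    * (Rpower (1 - x) (a + 1) * Rpower (1 + x) (b + 1) * (x - 1) ^ j * (x + 1) ^ (p - j))) p).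
  { intros x. unfold jacobi_weighted, jacobiP. rewrite scal_sum.
    apply sum_eq. intros j _. unfold c. fold r s. ring. }
  eapply is_derive_eq.
  { apply is_derive_sum_f_R0. intros j _.
    apply (is_derive_scal (fun x => _ * _)), is_derive_jacobi_weight_monomial, Ht. }
  transitivity (Rpower (1 - t) a * Rpower (1 + t) b * (-2)
    * sum_f_R0 (fun j => INR (S p - j) * Z j + INR (S j) * Z (S j)) p).
  - rewrite scal_sum. apply sum_eq. intros j Hj. unfold c, Z.
    replace (b + 1 + INR (p - j)) with (s - INR j)
      by (unfold s; rewrite minus_INR by lia; ring).
    replace (a + 1 + INR j) with (r - INR (p - j))
      by (unfold r; rewrite minus_INR by lia; ring).
    transitivity (Rpower (1 - t) a * Rpower (1 + t) b * / 2 ^ p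
      * (binomR r (p - j) * binomR s j * (t - 1) ^ j * (t + 1) ^ (p - j)
         * ((s - INR j) * (1 - t) - (r - INR (p - j)) * (1 + t)))); [ring|].
    rewrite binomR_lowering by exact Hj. simpl pow.
    field. apply pow_nonzero. lra.
  - rewrite sum_f_R0_shift_weighted. unfold jacobi_weighted, jacobiP, Z.
    replace (INR (S p) + a) with r by (unfold r; rewrite S_INR; ring).
    replace (INR (S p) + b) with s by (unfold s; rewrite S_INR; ring).
    ring.
Qed.

Lemma sum_f_R0_telescope (f : nat -> R) (n : nat) :
  sum_f_R0 (fun k => f (S k) - f k) n = f (S n) - f 0%nat.
Proof. induction n as [|n IH]; simpl; [ring | rewrite IH; ring]. Qed.

Lemma sum_f_R0_telescope_last (f g : nat -> R) (n : nat) :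
  (forall k, (k < n)%nat -> g k = f (S k)) -> g n = 0 ->
  sum_f_R0 (fun k => g k - f k) n = - f 0%nat.
Proof.
  intros Hg Hn. destruct n as [|n]; [simpl; rewrite Hn; ring|].
  rewrite tech5, Hn, (sum_eq _ (fun k => f (S k) - f k)), sum_f_R0_telescope
    by (intros k Hk; rewrite Hg by lia; reflexivity).
  ring.
Qed.

Lemma is_derive_pow_div_fact (j : nat) (t : R) :
  is_derive (fun s => s ^ j / INR (fact j)) t (INR j * t ^ pred j / INR (fact j)).
Proof. auto_derive; [exact I|]. unfold Rdiv. ring. Qed.

Section Antiderivative.

Variables (n : nat) (a b : R).

Let weighted (k : nat) : R -> R := jacobi_weighted (n - k) (a + INR k) (b + INR k).

Lemma is_derive_weighted_succ (k : nat) (t : R) : (k < n)%nat -> -1 < t < 1 ->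
  is_derive (weighted (S k)) t (-2 * INR (n - k) * weighted k t).
Proof.
  intros Hk Ht. unfold weighted.
  replace (n - k)%nat with (S (n - S k)) by lia.
  rewrite S_INR, <- !Rplus_assoc.
  now apply is_derive_jacobi_weighted.
Qed.

Definition antideriv_term (j k : nat) (s : R) : R :=
  INR (fact (n - k)) / 2 ^ k * (s ^ j / INR (fact j)) * weighted k s.

Definition antideriv_term_deriv (j k : nat) (t : R) : R :=
  INR (fact (n - S k)) / 2 ^ S k * (INR j * t ^ pred j / INR (fact j)) * weighted (S k) t.

Lemma is_derive_antideriv_term (j k : nat) (t : R) : (k < n)%nat -> -1 < t < 1 ->
  is_derive (antideriv_term j (S k)) t (antideriv_term_deriv j k t - antideriv_term j k t).
Proof.
  intros Hk Ht.
  eapply is_derive_eq.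
  { apply is_derive_Rmult; [apply (is_derive_scal (fun s => s ^ j / _)), is_derive_pow_div_fact|].
    now apply is_derive_weighted_succ. }
  unfold antideriv_term, antideriv_term_deriv.
  replace (n - k)%nat with (S (n - S k)) by lia.
  rewrite fact_simpl, mult_INR, S_INR. simpl pow.
  field. split; [apply INR_fact_neq_0 | apply pow_nonzero; lra].
Qed.

Lemma antideriv_term_deriv_succ (i k : nat) (t : R) : (k < i)%nat ->
  antideriv_term_deriv (i - k) k t = antideriv_term (i - S k) (S k) t.
Proof.
  intros Hk. unfold antideriv_term, antideriv_term_deriv.
  replace (i - k)%nat with (S (i - S k)) by lia.
  rewrite fact_simpl, mult_INR. simpl pred.
  field. split; [apply INR_fact_neq_0 | split; [apply pow_nonzero; lra | apply not_0_INR; lia]].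
Qed.

Lemma antideriv_sum_derivative (i : nat) (t : R) :
  sum_f_R0 (fun k => antideriv_term_deriv (i - k) k t - antideriv_term (i - k) k t) i
  = - antideriv_term i 0 t.
Proof.
  rewrite sum_f_R0_telescope_last with (f := fun k => antideriv_term (i - k) k t).
  - now rewrite Nat.sub_0_r.
  - intros k Hk. now apply antideriv_term_deriv_succ.
  - unfold antideriv_term_deriv. rewrite Nat.sub_diag. simpl INR. unfold Rdiv. ring.
Qed.

End Antiderivative.

Definition jacobi_const (n : nat) (a b : R) : R :=
  (2 * INR n + a + b + 1) * Gamma (INR n + a + b + 1)
  / (Rpower 2 (a + b + 1) * Gamma (INR n + a + 1) * Gamma (INR n + b + 1)).

Lemma jacobi_const_antideriv_term_0 (n i : nat) (a b t : R) :
  jacobi_const n a b * antideriv_term n a b i 0 t = t ^ i / INR (fact i) * jacobi_fun n a b t.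
Proof.
  unfold jacobi_fun, jacobi_const, antideriv_term, jacobi_weighted.
  rewrite Nat.sub_0_r. simpl INR. rewrite !Rplus_0_r. simpl pow. unfold Rdiv. rewrite Rinv_1. ring.
Qed.

Lemma jacobi_summand_eq (n j k : nat) (a b s : R) : (k < n)%nat ->
  Gamma_defined (INR n + a + b + 1) ->
  2 ^ (k + 1) * Gamma (INR n + a + b + 1) / Gamma (INR n + INR k + a + b + 2)
    * (s ^ j / INR (fact j)) * jacobi_fun (n - 1 - k) (a + 1 + INR k) (b + 1 + INR k) s
  = jacobi_const n a b * antideriv_term n a b j (S k) s.
Proof.
  intros Hk HN. unfold jacobi_fun, jacobi_const, antideriv_term.
  set (N := INR n + a + b + 1).
  replace (n - 1 - k)%nat with (n - S k)%nat by lia.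
  assert (Hnk : INR (n - S k) = INR n - 1 - INR k) by (rewrite minus_INR, S_INR by lia; ring).
  rewrite Hnk, S_INR.
  replace (INR n - 1 - INR k + (a + 1 + INR k) + (b + 1 + INR k) + 1) with (N + INR (S k))
    by (unfold N; rewrite S_INR; ring).
  replace (INR n + INR k + a + b + 2) with (N + INR (S k)) by (unfold N; rewrite S_INR; ring).
  replace (INR n - 1 - INR k + (a + 1 + INR k) + 1) with (INR n + a + 1) by ring.
  replace (INR n - 1 - INR k + (b + 1 + INR k) + 1) with (INR n + b + 1) by ring.
  replace (2 * (INR n - 1 - INR k) + (a + 1 + INR k) + (b + 1 + INR k) + 1)
    with (2 * INR n + a + b + 1) by ring.
  replace (a + 1 + INR k + (b + 1 + INR k) + 1) with (a + b + 1 + INR (2 * k + 2))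
    by (rewrite plus_INR, mult_INR; simpl; ring).
  replace (a + (INR k + 1)) with (a + 1 + INR k) by ring.
  replace (b + (INR k + 1)) with (b + 1 + INR k) by ring.
  rewrite Rpower_plus, Rpower_pow by lra.
  (* [Gamma N] is not known to be nonzero; when it vanishes both sides do. *)
  destruct (Req_dec (Gamma N) 0) as [E|E]; [rewrite E; unfold Rdiv; ring|].
  assert (G : Gamma (N + INR (S k)) <> 0) by now apply Gamma_plus_neq0.
  replace (2 * k + 2)%nat with ((k + 1) + S k)%nat by lia.
  rewrite (pow_add 2 (k + 1) (S k)). unfold jacobi_weighted, Rdiv. rewrite !Rinv_mult.
  set (ia := / Gamma (INR n + a + 1)). set (ib := / Gamma (INR n + b + 1)).
  set (ic := / Rpower 2 (a + b + 1)).
  field. repeat split; [apply INR_fact_neq_0 | apply pow_nonzero; lra .. | exact G].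
Qed.

Theorem lemma4p4 (n i : nat) (a b : R) :
  (1 <= n)%nat -> (i <= n - 1)%nat ->
  Gamma_defined (INR n + a + 1) ->
  Gamma_defined (INR n + b + 1) ->
  Gamma_defined (INR n + a + b + 1) ->
  forall t : R, -1 < t < 1 ->
  is_derive
    (fun s : R =>
       - sum_f_R0 (fun k =>
           2 ^ (k + 1) * Gamma (INR n + a + b + 1)
             / Gamma (INR n + INR k + a + b + 2)
           * (s ^ (i - k) / INR (fact (i - k)))
           * jacobi_fun (n - 1 - k) (a + 1 + INR k) (b + 1 + INR k) s) i)
    t
    (t ^ i / INR (fact i) * jacobi_fun n a b t).
Proof.
  (* Gamma (n+a+1) and Gamma (n+b+1) occur unchanged in all the normalizing constants. *)
  intros Hn Hi _ _ HN t Ht.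
  apply is_derive_ext with
    (fun s => - sum_f_R0 (fun k => jacobi_const n a b * antideriv_term n a b (i - k) (S k) s) i).
  { intros s. f_equal. apply sum_eq. intros k Hk.
    symmetry. apply jacobi_summand_eq; [lia | exact HN]. }
  eapply is_derive_eq.
  { apply (@is_derive_opp R_AbsRing R_NormedModule), is_derive_sum_f_R0. intros k Hk.
    apply (is_derive_scal (antideriv_term n a b (i - k) (S k))).
    apply is_derive_antideriv_term; [lia | exact Ht]. }
  rewrite <- jacobi_const_antideriv_term_0.
  transitivity (- (jacobi_const n a b * sum_f_R0 (fun k =>
    antideriv_term_deriv n a b (i - k) k t - antideriv_term n a b (i - k) k t) i)).
  - rewrite scal_sum. change (opp ?x) with (- x). f_equal. apply sum_eq. intros k _. ring.
  - rewrite antideriv_sum_derivative. ring.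
Qed.
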